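(* Let $C_1,C_2$ be Archimedean $d$-copulas with strict generators $\phi_1,\phi_2$, respectively. If there exists $\varepsilon>0$ such that $\phi_1/\phi_2$ is increasing on $(0,\varepsilon)$, then $\phi_1\circ\phi_2^{-1}:[0,\infty)\to[0,\infty)$ is subadditive near $\infty$.
   Context: A generator is a continuous, strictly decreasing function $\phi:[0,1]\to[0,\infty]$ with $\phi(1)=0$; it is strict if $\lim_{s\searrow0}\phi(s)=\infty$, in which case $\phi$ is a bijection $(0,1]\to[0,\infty)$ with inverse $\phi^{-1}$. A $d$-copula $C$ is Archimedean with strict generator $\phi$ if $C(\boldsymbol u)=\phi^{-1}(\sum_{k=1}^d\phi(u_k))$. A function $f:[0,\infty)\to[0,\infty)$ is subadditive near $\infty$ if there is $M\ge0$ with $f(x+y)\le f(x)+f(y)$ for all $x,y\in[M,\infty)$. *)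

From HB Require Import structures.
From mathcomp Require Import all_boot all_order all_algebra.
From mathcomp Require Import all_classical all_reals all_analysis.
Set Implicit Arguments. Unset Strict Implicit. Unset Printing Implicit Defensive.
Import Order.TTheory GRing.Theory Num.Theory.
Import numFieldNormedType.Exports.
Local Open Scope classical_set_scope.
Local Open Scope ring_scope.

Section Defs.
Variable R : realType.

(** Strict generator: represented on (0,1] (the value at 0 is +oo, encoded
    by the limit condition); continuous, strictly decreasing, phi 1 = 0,
    phi s -> +oo as s -> 0+. *)
Definition strict_generator (phi : R -> R) : Prop :=
  [/\ {within `]0, 1], continuous phi},
      {in `]0, 1] &, forall s t, s < t -> phi t < phi s},
      phi 1 = 0 &
      phi x @[x --> 0^'+] --> +oo].

Definition gen_inv (phi : R -> R) (x : R) : R :=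
  xget 1 [set s | 0 < s <= 1 /\ phi s = x].

Definition in_unit_cube d (u : 'I_d -> R) : Prop := forall k, 0 <= u k <= 1.

Definition is_copula d (C : ('I_d -> R) -> R) : Prop :=
  [/\ (forall u, in_unit_cube u -> 0 <= C u <= 1),
      (forall u, in_unit_cube u -> (exists k, u k = 0) -> C u = 0),
      (forall u k, in_unit_cube u -> (forall j, j != k -> u j = 1) -> C u = u k) &
      (forall a b : 'I_d -> R, in_unit_cube a -> in_unit_cube b ->
         (forall k, a k <= b k) ->
         0 <= \sum_(S : {set 'I_d})
                (-1) ^+ #|S| * C (fun k => if k \in S then a k else b k))].

(** C is an Archimedean d-copula with strict generator phi:
    C(u) = phi^{-1}(sum_k phi(u_k)), with the convention phi(0) = +oo,
    phi^{-1}(+oo) = 0 (so C(u) = 0 as soon as some u_k = 0). *)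
Definition archimedean_copula d (C : ('I_d -> R) -> R) (phi : R -> R) : Prop :=
  [/\ is_copula C, strict_generator phi &
      forall u, in_unit_cube u ->
        C u = if [forall k, 0 < u k] then gen_inv phi (\sum_k phi (u k)) else 0].

Definition subadditive_near_infty (f : R -> R) : Prop :=
  exists M : R, 0 <= M /\
    forall x y, M <= x -> M <= y -> f (x + y) <= f x + f y.

End Defs.

From HB Require Import structures.
From mathcomp Require Import all_boot all_order all_algebra.
From mathcomp Require Import all_classical all_reals all_analysis.
Set Implicit Arguments. Unset Strict Implicit. Unset Printing Implicit Defensive.
Import Order.TTheory GRing.Theory Num.Theory.
Import numFieldNormedType.Exports.
Local Open Scope classical_set_scope.
Local Open Scope ring_scope.

(* Write f := phi1 o phi2^{-1}.  Substituting s = phi2^{-1}(x) turns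
   f(x)/x into phi1(s)/phi2(s); as x grows, s decreases towards 0, so the
   hypothesis says that f(x)/x is nonincreasing for large x.  A function
   whose ratio f(x)/x is nonincreasing is subadditive:
   f(x+y) = x f(x+y)/(x+y) + y f(x+y)/(x+y) <= x f(x)/x + y f(y)/y. *)

Lemma subadditive_near_infty_ratio (R : realType) (f : R -> R) (M : R) :
  0 < M ->
  {in `[M, +oo[ &, forall x z, x <= z -> f z / z <= f x / x} ->
  subadditive_near_infty f.
Proof.
move=> M0 ratio_le; exists M; split=> [|x y Mx My]; first exact: ltW.
have x0 : 0 < x := lt_le_trans M0 Mx.
have y0 : 0 < y := lt_le_trans M0 My.
have xy0 : 0 < x + y by rewrite addr_gt0.
have inM z : M <= z -> z \in `[M, +oo[ by rewrite in_itv /= andbT.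
have x_xy : x <= x + y by rewrite lerDl ltW.
have y_xy : y <= x + y by rewrite lerDr ltW.
have Mxy : M <= x + y := le_trans Mx x_xy.
have kx := ratio_le _ _ (inM _ Mx) (inM _ Mxy) x_xy.
have ky := ratio_le _ _ (inM _ My) (inM _ Mxy) y_xy.
have split_ratio (g z : R) : 0 < z -> g = z * (g / z).
  by move=> z0; rewrite mulrC mulfVK // gt_eqF.
rewrite [f (x + y)](split_ratio _ _ xy0) mulrDl.
rewrite [f x](split_ratio _ _ x0) [f y](split_ratio _ _ y0).
by apply: lerD; apply: ler_wpM2l => //; apply: ltW.
Qed.

Section GeneratorInverse.
Variables (R : realType) (phi : R -> R).
Hypothesis sg_phi : strict_generator phi.

Lemma gen_invP (x : R) :
  0 <= x -> 0 < gen_inv phi x <= 1 /\ phi (gen_inv phi x) = x.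
Proof.
move=> x0; case: sg_phi => cphi _ phi1 phi_oo.
apply: (@xgetPex _ 1 [set s | 0 < s <= 1 /\ phi s = x]).
have /cvgryPge/(_ x) phi_ge := phi_oo.
have near_01 : \forall t \near (0:R)^'+, 0 < t < 1.
  near=> t; apply/andP; split.
    by near: t; exact: nbhs_right_gt.
  by near: t; exact: nbhs_right_lt.
have [a [xa /andP[a0 a1]]] : exists a, x <= phi a /\ 0 < a < 1.
  exact: (@filter_ex _ _ (at_right_proper_filter (0:R)) _
           (filterI phi_ge near_01)).
have cont : {within `[a, 1], continuous phi}.
  apply: (continuous_subspaceW _ cphi) => t /=.
  by rewrite !in_itv /= => /andP[at1 ->]; rewrite andbT (lt_le_trans a0 at1).
have bnd : Num.min (phi a) (phi 1) <= x <= Num.max (phi a) (phi 1).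
  by rewrite phi1 ge_min le_max x0 xa orbT.
have [c] := IVT (ltW a1) cont bnd.
rewrite in_itv /= => /andP[ac c1] pc; exists c; split => //.
by rewrite c1 andbT (lt_le_trans a0 ac).
Unshelve. all: by end_near.
Qed.

Lemma strict_generator_le_nmono :
  {in `]0, 1] &, {mono phi : s t / t <= s >-> s <= t}}.
Proof.
case: sg_phi => _ dphi _ _.
apply: le_nmono_in => s t sD tD st.
exact: dphi.
Qed.

Lemma strict_generator_gt0 (t : R) : 0 < t < 1 -> 0 < phi t.
Proof.
move=> /andP[t0 t1]; case: sg_phi => _ dphi phi1 _.
by rewrite -phi1 dphi // in_itv /= ?t0 ?(ltW t1) ?ltr01 ?lexx.
Qed.

Lemma gen_inv_le_iff (x t : R) :
  0 <= x -> 0 < t <= 1 -> (gen_inv phi x <= t) = (phi t <= x).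
Proof.
move=> x0 t01; have [s01 ps] := gen_invP x0.
by rewrite -{2}ps strict_generator_le_nmono // in_itv.
Qed.

Lemma gen_inv_anti (x y : R) : 0 <= x -> x <= y -> gen_inv phi y <= gen_inv phi x.
Proof.
move=> x0 xy; have [/andP[s0 s1] ps] := gen_invP x0.
by rewrite gen_inv_le_iff ?(le_trans x0 xy) ?s0 ?s1 // ps.
Qed.

Lemma gen_inv_ratio_anti (psi : R -> R) (t0 : R) :
  0 < t0 < 1 ->
  (forall s t, 0 < s -> s <= t -> t <= t0 -> psi s / phi s <= psi t / phi t) ->
  {in `[phi t0, +oo[ &, forall x z, x <= z ->
     psi (gen_inv phi z) / z <= psi (gen_inv phi x) / x}.
Proof.
move=> t0_01 ratio_le x z; rewrite !in_itv /= !andbT => t0x _ xz.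
have /andP[t0_pos /ltW t0_le1] := t0_01.
have x0 := le_trans (ltW (strict_generator_gt0 t0_01)) t0x.
have z0 := le_trans x0 xz.
have [/andP[sz0 _] pz] := gen_invP z0.
have [_ px] := gen_invP x0.
rewrite -{2}px -{2}pz ratio_le // ?gen_inv_anti //.
by rewrite gen_inv_le_iff // t0_pos.
Qed.

End GeneratorInverse.

Theorem mainTheorem13 (R : realType) (d : nat) (C1 C2 : ('I_d -> R) -> R)
    (phi1 phi2 : R -> R) :
  (2 <= d)%N ->
  archimedean_copula C1 phi1 ->
  archimedean_copula C2 phi2 ->
  (exists eps : R, 0 < eps /\
     forall s t, 0 < s -> s <= t -> t < eps -> t < 1 ->
       phi1 s / phi2 s <= phi1 t / phi2 t) ->
  subadditive_near_infty (fun x => phi1 (gen_inv phi2 x)).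
Proof.
move=> _ _ [_ sg2 _] [eps [eps0 ratio_le]].
set m := Num.min eps 1; set t0 := m / 2.
have m0 : 0 < m by rewrite lt_min eps0 ltr01.
have t0_pos : 0 < t0 by rewrite divr_gt0.
have t0m : t0 < m by rewrite /t0 ltr_pdivrMr // ltr_pMr // ltr1n.
have [t0_eps t0_1] : t0 < eps /\ t0 < 1 by apply/andP; rewrite -lt_min.
have t0_01 : 0 < t0 < 1 by rewrite t0_pos.
have phi2_t0 := strict_generator_gt0 sg2 t0_01.
apply: (subadditive_near_infty_ratio phi2_t0).
apply: (gen_inv_ratio_anti sg2 t0_01).
by move=> s t s0 st tt0; rewrite ratio_le // (le_lt_trans tt0).
Qed.
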